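(* Let $G=(V,E)$ be a connected, locally finite simple graph, let $x\in V$, let $u:V\to\mathbb{R}$ be harmonic, and let $0\le a\le b<\infty$ be integers. Define, for $k\ge 0$, $$N(k) = \sum_{y:\, d(x,y)=k+1} d_{\mathrm{in}}(y)\, u(y)^2 - \sum_{y:\, d(x,y)=k} d_{\mathrm{out}}(y)\, u(y)^2 .$$ If $G$ is locally expansive in $\{v\in V: a\le d(x,v)\le b\}$, i.e. $d_{\mathrm{out}}(v)\ge d_{\mathrm{in}}(v)$ for every $v$ with $a\le d(x,v)\le b$, then $$\sum_{y:\,d(x,y)=b+1} d_{\mathrm{in}}(y)\, u(y)^2 \ge (b-a+1)N(a) + \sum_{y:\,d(x,y)=a} d_{\mathrm{out}}(y)\, u(y)^2.$$ If $G$ is locally contractive in the same region, i.e. $d_{\mathrm{out}}(v)\le d_{\mathrm{in}}(v)$ for every $v$ with $a\le d(x,v)\le b$, then $$\sum_{y:\,d(x,y)=b+1} d_{\mathrm{in}}(y)\, u(y)^2 \le (b-a+1)N(b) + \sum_{y:\,d(x,y)=a} d_{\mathrm{out}}(y)\, u(y)^2.$$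
   Context: $d(\cdot,\cdot)$ is the graph distance. $u$ is harmonic if $\sum_{w:(v,w)\in E}(u(v)-u(w))=0$ for every $v\in V$. With $x$ fixed, $d_{\mathrm{in}}(v)=\#\{w: (w,v)\in E,\ d(w,x)=d(v,x)-1\}$ and $d_{\mathrm{out}}(v)=\#\{w: (w,v)\in E,\ d(w,x)=d(v,x)+1\}$. *)

From HB Require Import structures.
From mathcomp Require Import all_boot all_order all_algebra.
From mathcomp Require Import boolp classical_sets functions cardinality fsbigop reals.
Set Implicit Arguments. Unset Strict Implicit. Unset Printing Implicit Defensive.
Import Order.TTheory GRing.Theory Num.Theory.
Local Open Scope ring_scope.

(* A locally finite simple graph on a (possibly infinite) vertex type V is
   given by its finite neighbour lists [nb v]. *)
Definition adj (V : eqType) (nb : V -> seq V) : rel V := fun v w => w \in nb v.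

Definition simple_locfin_graph (V : eqType) (nb : V -> seq V) : Prop :=
  (forall v, uniq (nb v)) /\
  (forall v, v \notin nb v) /\
  (forall v w, (w \in nb v) = (v \in nb w)).

Definition walk (V : eqType) (nb : V -> seq V) (v w : V) (n : nat) : Prop :=
  exists p : seq V, [/\ path (adj nb) v p, last v p = w & size p = n].

Definition connected_graph (V : eqType) (nb : V -> seq V) : Prop :=
  forall v w, exists n, walk nb v w n.

Definition is_dist (V : eqType) (nb : V -> seq V) (v w : V) (k : nat) : Prop :=
  walk nb v w k /\ forall m, (m < k)%N -> ~ walk nb v w m.

Definition d_in (V : eqType) (nb : V -> seq V) (x v : V) : nat :=
  count (fun w => `[< exists k, is_dist nb x w k /\ is_dist nb x v k.+1 >]) (nb v).

Definition d_out (V : eqType) (nb : V -> seq V) (x v : V) : nat :=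
  count (fun w => `[< exists k, is_dist nb x v k /\ is_dist nb x w k.+1 >]) (nb v).

Definition harmonic (R : realType) (V : eqType) (nb : V -> seq V) (u : V -> R) : Prop :=
  forall v, \sum_(w <- nb v) (u v - u w) = 0.

Definition sphere (V : eqType) (nb : V -> seq V) (x : V) (k : nat) : set V :=
  [set y | is_dist nb x y k].

Definition in_energy (R : realType) (V : choiceType) (nb : V -> seq V) (x : V)
  (u : V -> R) (k : nat) : R :=
  \sum_(y \in sphere nb x k) ((d_in nb x y)%:R * u y ^+ 2).

Definition out_energy (R : realType) (V : choiceType) (nb : V -> seq V) (x : V)
  (u : V -> R) (k : nat) : R :=
  \sum_(y \in sphere nb x k) ((d_out nb x y)%:R * u y ^+ 2).

Definition Nfun (R : realType) (V : choiceType) (nb : V -> seq V) (x : V)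
  (u : V -> R) (k : nat) : R :=
  in_energy nb x u k.+1 - out_energy nb x u k.

From HB Require Import structures.
From mathcomp Require Import all_boot all_order all_algebra.
From mathcomp Require Import boolp classical_sets functions cardinality fsbigop reals.
From mathcomp Require Import lra zify.
Import Order.TTheory GRing.Theory Num.Theory.
Set Implicit Arguments. Unset Strict Implicit. Unset Printing Implicit Defensive.
Local Open Scope ring_scope.
Local Open Scope classical_set_scope.

(* For harmonic u, sum_(w ~ v) (u(w)^2 - u(v)^2) = sum_(w ~ v) (u(w) - u(v))^2 >= 0.
   Summing this over the sphere S_(k+1) and sorting the edges by the layer of
   their second endpoint, the edges inside S_(k+1) cancel, those towards S_(k+2)
   contribute N(k+1) and those towards S_k contribute -N(k): so N is
   nondecreasing.  Since in(k+1) = N(k) + out(k), iterating with in(k) <= out(k)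
   (expansive case) or in(k) >= out(k) (contractive case) for a < k <= b compares
   in(b+1) with sum_(k=a..b) N(k) + out(a), and monotonicity of N bounds this sum
   by (b-a+1) N(a), resp. (b-a+1) N(b). *)

Section Distance.
Variables (V : eqType) (nb : V -> seq V) (x : V).

Lemma walk0 v w : walk nb v w 0 <-> w = v.
Proof.
split; first by case=> [[|? ?] [_ /= <- //]].
by move=> ->; exists [::].
Qed.

Lemma walk_rcons v w z n : walk nb v w n -> z \in nb w -> walk nb v z n.+1.
Proof.
case=> p [p_path p_last p_size] wz; exists (rcons p z); split.
- by rewrite rcons_path p_path /= p_last.
- by rewrite last_rcons.
- by rewrite size_rcons p_size.
Qed.

Lemma walkS v z n : walk nb v z n.+1 -> exists2 w, walk nb v w n & z \in nb w.
Proof.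
case=> p [+ + +]; case/lastP: p => [//|q z'].
rewrite rcons_path last_rcons size_rcons => /andP[q_path wz'] <- [q_size].
by exists (last v q) => //; exists q.
Qed.

Lemma is_dist_uniq v k m : is_dist nb x v k -> is_dist nb x v m -> k = m.
Proof.
case=> wk mink [wm minm]; case: (ltngtP k m) => // [km|mk].
- by case: (minm _ km wk).
- by case: (mink _ mk wm).
Qed.

Lemma walk_is_dist v n : walk nb x v n -> exists2 m, (m <= n)%N & is_dist nb x v m.
Proof.
move=> wn; have ex_walk : exists n, `[< walk nb x v n >] by exists n; apply/asboolP.
case: (ex_minnP ex_walk) => m /asboolP wm minm.
exists m; first exact/minm/asboolP.
split=> // j jm wj; have := minm j (asboolT wj); by rewrite leqNgt jm.
Qed.

Lemma is_dist_adj_le v w k m :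
  w \in nb v -> is_dist nb x v k -> is_dist nb x w m -> (m <= k.+1)%N.
Proof.
move=> vw [wk _] [_ minm]; rewrite leqNgt; apply/negP => km.
exact: minm _ km (walk_rcons wk vw).
Qed.

Lemma is_dist_adj v w k :
  w \in nb v -> is_dist nb x v k -> exists2 m, is_dist nb x w m & (m <= k.+1)%N.
Proof.
move=> vw dvk; have [m _ dwm] := walk_is_dist (walk_rcons dvk.1 vw).
by exists m => //; apply: is_dist_adj_le vw dvk dwm.
Qed.

Lemma is_distS z k : is_dist nb x z k.+1 -> exists2 w, is_dist nb x w k & z \in nb w.
Proof.
move=> dz; have [w wk wz] := walkS dz.1.
have [m mk dwm] := walk_is_dist wk.
have km : (k <= m)%N by rewrite -ltnS (is_dist_adj_le wz dwm dz).
by exists w => //; rewrite (_ : k = m) //; apply/eqP; rewrite eqn_leq km mk.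
Qed.

(* Breadth-first enumeration of the sphere of radius k: the finite list behind
   the sums over [sphere nb x k]. *)
Fixpoint sphere_seq (k : nat) : seq V :=
  if k is k'.+1 then
    undup [seq w <- flatten (map nb (sphere_seq k')) | `[< is_dist nb x w k'.+1 >]]
  else [:: x].

Lemma sphere_seq_uniq k : uniq (sphere_seq k).
Proof. by case: k => [|k] //=; apply: undup_uniq. Qed.

Lemma mem_sphere_seq k w : w \in sphere_seq k <-> is_dist nb x w k.
Proof.
elim: k w => [|k IH] w /=.
  rewrite inE; split; first by move/eqP ->; split; [apply/walk0|].
  by case=> /walk0 ->.
rewrite mem_undup mem_filter; split; first by case/andP => /asboolP.
move=> dwk; rewrite asboolT //=; have [v dvk vw] := is_distS dwk.
by apply/flatten_mapP; exists v => //; apply/IH.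
Qed.

Lemma mem_sphere_seq_dist k m w :
  is_dist nb x w m -> (w \in sphere_seq k) = (k == m).
Proof.
move=> dwm; apply/idP/eqP => [/mem_sphere_seq dwk | ->]; last exact/mem_sphere_seq.
exact: is_dist_uniq dwk dwm.
Qed.

End Distance.

Arguments sphere_seq : simpl never.

Lemma big_seq_memC (R : Type) (idx : R) (op : Monoid.com_law idx)
    (T : eqType) (s t : seq T) (F : T -> R) : uniq s -> uniq t ->
  \big[op/idx]_(w <- s | w \in t) F w = \big[op/idx]_(w <- t | w \in s) F w.
Proof.
move=> s_uniq t_uniq; rewrite -[LHS]big_filter -[RHS]big_filter; apply: perm_big.
by apply: uniq_perm; rewrite ?filter_uniq // => w; rewrite !mem_filter andbC.
Qed.

Lemma fsum_sphere (R : nmodType) (V : choiceType) (nb : V -> seq V) (x : V) k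
    (F : V -> R) :
  \sum_(y \in sphere nb x k) F y = \sum_(y <- sphere_seq nb x k) F y.
Proof.
have -> : sphere nb x k = [set` sphere_seq nb x k].
  by apply/seteqP; split=> y /mem_sphere_seq.
by rewrite -fsbig_seq // sphere_seq_uniq.
Qed.

Lemma natr_count_mul (R : pzSemiRingType) (T : Type) (P : pred T) s (c : R) :
  (count P s)%:R * c = \sum_(w <- s | P w) c.
Proof.
by rewrite -sum1_count natr_sum mulr_suml; apply: eq_bigr => _ _; rewrite mul1r.
Qed.

Lemma harmonic_sum_sqrB_ge0 (R : realType) (V : eqType) (nb : V -> seq V)
    (u : V -> R) v :
  harmonic nb u -> 0 <= \sum_(w <- nb v) (u w ^+ 2 - u v ^+ 2).
Proof.
move=> u_harm.
have sqrB w : u w ^+ 2 - u v ^+ 2 = (u w - u v) ^+ 2 - 2 * u v * (u v - u w).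
  by rewrite !sqrrB; lra.
rewrite (eq_bigr _ (fun w _ => sqrB w)) sumrB -mulr_sumr u_harm mulr0 subr0.
by apply: sumr_ge0 => w _; apply: sqr_ge0.
Qed.

Section Spheres.
Variables (V : choiceType) (nb : V -> seq V) (x : V).
Hypothesis nb_graph : simple_locfin_graph nb.

Let nb_uniq v : uniq (nb v). Proof. by case: nb_graph. Qed.
Let nb_sym v w : (w \in nb v) = (v \in nb w). Proof. by case: nb_graph => _ []. Qed.

Local Notation S := (sphere_seq nb x).

Section EdgeSums.
Variable R : zmodType.

Definition edge_sum i j (F : V -> V -> R) : R :=
  \sum_(v <- S i) \sum_(w <- S j | w \in nb v) F v w.

Lemma edge_sumC i j F : edge_sum i j F = edge_sum j i (fun v w => F w v).
Proof.
rewrite /edge_sum; under eq_bigr do rewrite big_mkcond.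
rewrite exchange_big /=; apply: eq_bigr => w _.
by rewrite [RHS]big_mkcond; apply: eq_bigr => v _; rewrite nb_sym.
Qed.

Lemma edge_sum_antisym i j F : (forall v w, F w v = - F v w) ->
  edge_sum i j F = - edge_sum j i F.
Proof.
move=> F_anti; rewrite edge_sumC /edge_sum -sumrN.
by apply: eq_bigr => v _; rewrite -sumrN; apply: eq_bigr => w _; rewrite F_anti.
Qed.

(* Distances of adjacent vertices differ by at most one. *)
Lemma sum_nb_layers k v (F : V -> R) : is_dist nb x v k.+1 ->
  \sum_(w <- nb v) F w = \sum_(w <- S k.+2 | w \in nb v) F w +
    \sum_(w <- S k.+1 | w \in nb v) F w + \sum_(w <- S k | w \in nb v) F w.
Proof.
move=> dv; rewrite -!(big_seq_memC _ _ (nb_uniq v) (sphere_seq_uniq _ _ _)).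
rewrite !(big_mkcond (fun w => w \in S _)) -!big_split /=.
apply: eq_big_seq => w vw; have [m dwm mk] := is_dist_adj vw dv.
have km : (k <= m)%N by rewrite -ltnS; apply: is_dist_adj_le dwm dv; rewrite -nb_sym.
rewrite !(mem_sphere_seq_dist _ dwm).
have [->|[->|->]] : m = k \/ m = k.+1 \/ m = k.+2 by lia.
- by rewrite eqxx !gtn_eqF // !add0r.
- by rewrite eqxx gtn_eqF // ltn_eqF // add0r addr0.
- by rewrite eqxx !ltn_eqF // !addr0.
Qed.

End EdgeSums.

Section Energies.
Variables (R : realType) (u : V -> R).

Lemma in_energy_edge k : in_energy nb x u k.+1 = edge_sum k k.+1 (fun _ w => u w ^+ 2).
Proof.
rewrite edge_sumC /in_energy fsum_sphere /edge_sum.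
apply: eq_big_seq => y /mem_sphere_seq dy.
rewrite /d_in (@eq_in_count _ _ (mem (S k))) => [|w _].
  by rewrite natr_count_mul big_seq_memC ?sphere_seq_uniq.
apply/asboolP/idP => [[k' [dw dy']]|/mem_sphere_seq dw]; last by exists k.
by apply/mem_sphere_seq; case: (is_dist_uniq dy' dy) => <-.
Qed.

Lemma out_energy_edge k : out_energy nb x u k = edge_sum k k.+1 (fun v _ => u v ^+ 2).
Proof.
rewrite /out_energy fsum_sphere /edge_sum; apply: eq_big_seq => y /mem_sphere_seq dy.
rewrite /d_out (@eq_in_count _ _ (mem (S k.+1))) => [|w _].
  by rewrite natr_count_mul big_seq_memC ?sphere_seq_uniq.
apply/asboolP/idP => [[k' [dy' dw]]|/mem_sphere_seq dw]; last by exists k.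
by apply/mem_sphere_seq; rewrite (is_dist_uniq dy dy').
Qed.

Lemma Nfun_edge k :
  Nfun nb x u k = edge_sum k k.+1 (fun v w => u w ^+ 2 - u v ^+ 2).
Proof.
rewrite /Nfun in_energy_edge out_energy_edge /edge_sum -sumrB.
by under eq_bigr do rewrite -sumrB.
Qed.

Lemma ler_sphere_energy k (f g : V -> nat) :
  (forall y, is_dist nb x y k -> (f y <= g y)%N) ->
  \sum_(y \in sphere nb x k) ((f y)%:R * u y ^+ 2) <=
    \sum_(y \in sphere nb x k) ((g y)%:R * u y ^+ 2).
Proof.
move=> fg; rewrite !fsum_sphere !big_seq; apply: ler_sum => y /mem_sphere_seq dy.
by rewrite ler_wpM2r ?sqr_ge0 // ler_nat fg.
Qed.

Hypothesis u_harm : harmonic nb u.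

Lemma Nfun_nondecreasing : {homo Nfun nb x u : m n / (m <= n)%N >-> m <= n}.
Proof.
apply: homo_leq => [//|n m p|k]; first exact: le_trans.
pose D i j := edge_sum i j (fun v w => u w ^+ 2 - u v ^+ 2).
have D_anti i j : D i j = - D j i by apply: edge_sum_antisym => v w; rewrite opprB.
have D_diag : D k.+1 k.+1 = 0 by have := D_anti k.+1 k.+1; lra.
have : 0 <= \sum_(v <- S k.+1) \sum_(w <- nb v) (u w ^+ 2 - u v ^+ 2).
  by apply: sumr_ge0 => v _; apply: harmonic_sum_sqrB_ge0.
under eq_big_seq => v /mem_sphere_seq dv do rewrite (sum_nb_layers _ dv).
rewrite !big_split.
change (0 <= D k.+1 k.+2 + D k.+1 k.+1 + D k.+1 k -> Nfun nb x u k <= Nfun nb x u k.+1).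
by rewrite D_diag (D_anti k.+1 k) /D -!Nfun_edge; lra.
Qed.

End Energies.
End Spheres.

Section Telescoping.
Variable R : realDomainType.

Lemma telescope_le (I O : nat -> R) a b :
  (a <= b)%N -> (forall k, (a < k <= b)%N -> I k <= O k) ->
  \sum_(a <= k < b.+1) (I k.+1 - O k) + O a <= I b.+1.
Proof.
elim: b => [|b IH] ab IO.
  by move: ab; rewrite leqn0 => /eqP ->; rewrite big_nat1 subrK.
case: (ltngtP a b.+1) ab => // [ab|->] _; last by rewrite big_nat1 subrK.
rewrite big_nat_recr ?(ltnW ab) //=.
have : \sum_(a <= k < b.+1) (I k.+1 - O k) + O a <= I b.+1.
  by apply: IH => // k /andP[ak kb]; apply: IO; rewrite ak leqW.
have IOb : I b.+1 <= O b.+1 by apply: IO; rewrite ab /=.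
lra.
Qed.

Lemma telescope_ge (I O : nat -> R) a b :
  (a <= b)%N -> (forall k, (a < k <= b)%N -> O k <= I k) ->
  I b.+1 <= \sum_(a <= k < b.+1) (I k.+1 - O k) + O a.
Proof.
move=> ab OI; have NIO k : (a < k <= b)%N -> - I k <= - O k.
  by move/OI; rewrite lerN2.
have := telescope_le ab NIO.
rewrite (eq_bigr (fun k => - (I k.+1 - O k))) => [|k _]; last by rewrite opprD.
by rewrite sumrN -opprD lerN2.
Qed.

Lemma sum_nondecreasing_bounds (N : nat -> R) a b :
  {homo N : m n / (m <= n)%N >-> m <= n} -> (a <= b)%N ->
  (b - a + 1)%:R * N a <= \sum_(a <= k < b.+1) N k <= (b - a + 1)%:R * N b.
Proof.
move=> N_mono ab; rewrite !mulr_natl addn1 -subSn // -!sumr_const_nat.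
by apply/andP; split; apply: ler_sum_nat => k /andP[ak kb]; apply: N_mono.
Qed.

End Telescoping.

Theorem corollary1 (R : realType) (V : choiceType) (nb : V -> seq V) (x : V)
  (u : V -> R) (a b : nat) :
  simple_locfin_graph nb -> connected_graph nb -> harmonic nb u ->
  (a <= b)%N ->
  ((forall v k, (a <= k <= b)%N -> is_dist nb x v k ->
      (d_in nb x v <= d_out nb x v)%N) ->
    in_energy nb x u b.+1 >=
      (b - a + 1)%:R * Nfun nb x u a + out_energy nb x u a) /\
  ((forall v k, (a <= k <= b)%N -> is_dist nb x v k ->
      (d_out nb x v <= d_in nb x v)%N) ->
    in_energy nb x u b.+1 <=
      (b - a + 1)%:R * Nfun nb x u b + out_energy nb x u a).
Proof.
move=> nb_graph _ u_harm ab.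
have /andP[Nsum_ge Nsum_le] :=
  sum_nondecreasing_bounds (Nfun_nondecreasing x nb_graph u_harm) ab.
split=> dio.
- have := @telescope_le _ (in_energy nb x u) (out_energy nb x u) a b ab.
  have io k : (a < k <= b)%N -> in_energy nb x u k <= out_energy nb x u k.
    by case/andP=> ak kb; apply: ler_sphere_energy => y; apply: dio; rewrite ltnW.
  by move=> /(_ io); lra.
- have := @telescope_ge _ (in_energy nb x u) (out_energy nb x u) a b ab.
  have oi k : (a < k <= b)%N -> out_energy nb x u k <= in_energy nb x u k.
    by case/andP=> ak kb; apply: ler_sphere_energy => y; apply: dio; rewrite ltnW.
  by move=> /(_ oi); lra.
Qed.
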